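(* Let $d \ge 2$ and $N=(d-1)^2$. For ${\bm \theta}=(\theta_1,\ldots,\theta_N)\in\mathbb{R}^N$ let $H_d({\bm \theta})$ be the $d\times d$ matrix whose first row and first column consist entirely of $1$'s and whose lower-right $(d-1)\times(d-1)$ submatrix (the core) has entries $[H_d({\bm \theta})]_{i,j}=e^{\mathrm{i}\theta_{(i-2)(d-1)+(j-1)}}$ for $2\le i,j\le d$. Define $\mathcal{V}_d:\mathbb{R}^N\to\mathbb{R}$ by $$\mathcal{V}_d({\bm \theta})=\sum_{i\neq j}\big|[H_d({\bm \theta})H_d({\bm \theta})^*]_{i,j}\big|^2,$$ and consider the gradient system $\dot{{\bm \theta}}=\Phi_d({\bm \theta}):=-\nabla\mathcal{V}_d({\bm \theta})$. Suppose ${\bm \theta}_0$ is such that $H=H_d({\bm \theta}_0)$ is a complex Hadamard matrix, i.e. $HH^*=dI_d$ (so ${\bm \theta}_0$ is a fixed point of $\Phi_d$). Then the dimension of the center subspace of the linearization $D\Phi_d|_{{\bm \theta}_0}$ (the span of generalized eigenvectors for eigenvalues with zero real part; since $D\Phi_d|_{{\bm \theta}_0}$ is symmetric this is its kernel) equals the defect $d(H)$.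
   Context: The defect $d(H)$ of a $d\times d$ complex Hadamard matrix $H$ is the dimension of the real vector space of matrices $R\in M^{d\times d}(\mathbb{R})$ satisfying the real linear system: $[R]_{i,1}=0$ for $1\le i\le d$; $[R]_{1,j}=0$ for $2\le j\le d$; and $\sum_{k=1}^d [H]_{i,k}\overline{[H]_{j,k}}\big([R]_{i,k}-[R]_{j,k}\big)=0$ for all $1\le i<j\le d$ (each such complex equation imposing its real and imaginary parts). $^*$ denotes conjugate transpose. *)

From HB Require Import structures.
From mathcomp Require Import all_boot all_order all_algebra.
From mathcomp Require Import all_classical all_reals all_analysis.
From mathcomp Require Import complex.
Set Implicit Arguments. Unset Strict Implicit. Unset Printing Implicit Defensive.
Import Order.TTheory GRing.Theory Num.Theory.
Import numFieldNormedType.Exports.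
Local Open Scope ring_scope.

Section HadamardDefs.
Variable R : realType.

Definition expi (t : R) : R[i] := Complex (cos t) (sin t).

Definition adjmx m n (A : 'M[R[i]]_(m, n)) : 'M[R[i]]_(n, m) :=
  (map_mx (@conjc R) A)^T.

(* H_d(theta) with d = 1 + n : first row and column all ones, core
   [H]_{i,j} = e^{i theta_{(i-2)(d-1)+(j-1)}} (1-based), i.e. the core is the
   row-major reshaping vec_mx theta of theta : 'rV_(n*n). *)
Definition Hd (n : nat) (theta : 'rV[R]_(n * n)) : 'M[R[i]]_(1 + n) :=
  block_mx (const_mx 1) (const_mx 1) (const_mx 1) (map_mx expi (vec_mx theta)).

Definition Vd (n : nat) (theta : 'rV[R]_(n * n)) : R :=
  let G := Hd theta *m adjmx (Hd theta) in
  \sum_(i < 1 + n) \sum_(j < 1 + n | j != i) complex.Re (`|G i j| ^+ 2).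

Definition Phid (n : nat) (theta : 'rV[R]_(n * n)) : 'rV[R]_(n * n) :=
  \row_k (- 'D_(delta_mx 0 k) (@Vd n) theta).

Definition DPhid (n : nat) (theta0 : 'rV[R]_(n * n)) : 'M[R]_(n * n) :=
  \matrix_(i, j) 'D_(delta_mx 0 j) (fun theta => Phid theta 0 i) theta0.

(* Dimension of the center subspace of a real square matrix A: the span of the
   generalized eigenvectors (of the complexification) for eigenvalues with zero
   real part. rs is a list of the eigenvalues (roots of the characteristic
   polynomial) and the generalized eigenspace of z is ker (A - z)^m. *)
Definition center_dim (m : nat) (A : 'M[R]_m) : nat :=
  let Ac := map_mx (real_complex R) A in
  let rs := sval (closed_field_poly_normal (char_poly Ac)) in
  \rank (\sum_(z <- undup rs | complex.Re z == 0)
           kermx (((Ac - z%:M) ^+ m)^T))%MS.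

(* The real linear system defining the defect, as a linear map
   'M[R]_d -> R^(3 d^2) whose kernel is the solution space:
   block 1: [R]_{i,1} (all i) and [R]_{1,j} (j >= 2);
   blocks 2,3: real and imaginary parts of
     sum_k H_ik conj(H_jk) (R_ik - R_jk)  for i < j. *)
Definition defect_map (d : nat) (H : 'M[R[i]]_d) (X : 'M[R]_d) :
    'rV[R]_(d * d + (d * d + d * d)) :=
  let S i j := \sum_(k < d) H i k * conjc (H j k) * real_complex R (X i k - X j k) in
  row_mx (mxvec (\matrix_(i < d, j < d)
                  (if (val j == 0%N) || (val i == 0%N) then X i j else 0)))
   (row_mx (mxvec (\matrix_(i < d, j < d) (if (val i < val j)%N then complex.Re (S i j) else 0)))
           (mxvec (\matrix_(i < d, j < d) (if (val i < val j)%N then complex.Im (S i j) else 0)))).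

Definition defect (d : nat) (H : 'M[R[i]]_d) : nat :=
  \rank (kermx (lin1_mx (fun v : 'rV[R]_(d * d) => defect_map H (vec_mx v)))).

End HadamardDefs.

From HB Require Import structures.
From mathcomp Require Import all_boot all_order all_algebra.
From mathcomp Require Import all_classical all_reals all_analysis.
From mathcomp Require Import complex.
Import Order.TTheory GRing.Theory Num.Theory.
Import numFieldNormedType.Exports.
Local Open Scope ring_scope.
From mathcomp Require Import ring.
Set Implicit Arguments. Unset Strict Implicit. Unset Printing Implicit Defensive.

(* The phases of H_d(theta) form a matrix P(theta) that is linear in theta, and
   |[H H^*]_ij|^2 = sum_{k,l} cos ((P_ik - P_jk) - (P_il - P_jl)); so V_d is a
   sum of cosines of linear forms lambda_s, and D Phi_d at theta0 is the
   symmetric matrix sum_s cos (lambda_s theta0) lambda_s lambda_s^T.  If H is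
   Hadamard, sum_k e^{i (P_ik - P_jk)} = 0 for i <> j, and the quadratic form
   of D Phi_d at y collapses to
     -2 sum_{i <> j} |sum_k H_ik conj(H_jk) (Y_ik - Y_jk)|^2,   Y = P(y).
   Hence D Phi_d is negative semidefinite with kernel the solutions y of the
   defect system for Y = P(y); this loses no solution, since the defect system
   forces the first row and column of R to vanish.  Finally, for a real
   symmetric matrix the only eigenvalue on the imaginary axis is 0 and
   ker D^m = ker D, so the center subspace is the kernel. *)

Section ComplexSums.
Variable R : rcfType.

Lemma Re_sum (I : Type) (r : seq I) (P : pred I) (F : I -> R[i]) :
  complex.Re (\sum_(i <- r | P i) F i) = \sum_(i <- r | P i) complex.Re (F i).
Proof. by apply: big_morph => // -[a b] [c d]. Qed.

Lemma Im_sum (I : Type) (r : seq I) (P : pred I) (F : I -> R[i]) :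
  complex.Im (\sum_(i <- r | P i) F i) = \sum_(i <- r | P i) complex.Im (F i).
Proof. by apply: big_morph => // -[a b] [c d]. Qed.

Lemma Re2_Im2_eq0 (z : R[i]) : (complex.Re z ^+ 2 + complex.Im z ^+ 2 == 0) = (z == 0).
Proof.
by case: z => a b; rewrite paddr_eq0 ?sqr_ge0 // !sqrf_eq0 eq_complex.
Qed.

Lemma sum_offdiag_Re2_Im2_eq0 (I : finType) (F : I -> I -> R[i]) :
  \sum_i \sum_(j | j != i) (complex.Re (F i j) ^+ 2 + complex.Im (F i j) ^+ 2) = 0 <->
  (forall i j, i != j -> F i j = 0).
Proof.
have N_ge0 (z : R[i]) : 0 <= complex.Re z ^+ 2 + complex.Im z ^+ 2.
  exact: addr_ge0 (sqr_ge0 _) (sqr_ge0 _).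
split=> [sum0 i j ij|F0].
  have := psumr_eq0P (fun i _ => sumr_ge0 _ (fun j _ => N_ge0 (F i j))) sum0 (i := i) isT.
  move=> /(psumr_eq0P (fun j _ => N_ge0 (F i j)))/(_ j); rewrite eq_sym => /(_ ij).
  by move/eqP; rewrite Re2_Im2_eq0 => /eqP.
apply: big1 => i _; apply: big1 => j ji.
by rewrite F0 1?eq_sym //= expr0n /= addr0.
Qed.

End ComplexSums.

Section Expi.
Variable R : realType.

Lemma expi_mulJ (a b : R) : expi a * conjc (expi b) = expi (a - b).
Proof. by rewrite /expi cosB sinB /=; congr Complex; ring. Qed.

Lemma expi_mul_real (a r : R) : expi a * r%:C%C = Complex (cos a * r) (sin a * r).
Proof. by rewrite /expi /=; congr Complex; ring. Qed.

Lemma Re_normc2_sum_expi m (al : 'I_m -> R) :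
  complex.Re (`|\sum_k expi (al k)| ^+ 2) = \sum_k \sum_l cos (al k - al l).
Proof.
rewrite -add_Re2_Im2 /= Re_sum Im_sum !expr2 !mulr_suml -big_split /=.
apply: eq_bigr => k _; rewrite !mulr_sumr -big_split /=.
by apply: eq_bigr => l _; rewrite cosB.
Qed.

(* Expanding [cos (al k - al l)] and the square, every term but the cross term
   factors through [\sum_k expi (al k)]. *)
Lemma sum_cos_sqr_diff m (al a : 'I_m -> R) : \sum_k expi (al k) = 0 ->
  \sum_k \sum_l cos (al k - al l) * (a k - a l) ^+ 2 =
    - 2 * (complex.Re (\sum_k expi (al k) * (a k)%:C%C) ^+ 2
           + complex.Im (\sum_k expi (al k) * (a k)%:C%C) ^+ 2).
Proof.
move=> sum0; set S := \sum_k expi (al k) * _.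
have /(congr1 (@complex.Re R)) := sum0; rewrite Re_sum => C0.
have /(congr1 (@complex.Im R)) := sum0; rewrite Im_sum => S0.
have ReS : complex.Re S = \sum_k cos (al k) * a k.
  by rewrite Re_sum; apply: eq_bigr => k _; rewrite expi_mul_real.
have ImS : complex.Im S = \sum_k sin (al k) * a k.
  by rewrite Im_sum; apply: eq_bigr => k _; rewrite expi_mul_real.
rewrite ReS ImS; move: C0 S0 => /= C0 S0.
set P := \sum_l cos (al l) * a l ^+ 2; set Q := \sum_l sin (al l) * a l ^+ 2.
set X := \sum_k cos (al k) * a k; set Y := \sum_k sin (al k) * a k.
have inner k : \sum_l cos (al k - al l) * (a k - a l) ^+ 2 =
    cos (al k) * P + sin (al k) * Q - 2 * (cos (al k) * a k) * X
    - 2 * (sin (al k) * a k) * Y.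
  have E l : cos (al k - al l) * (a k - a l) ^+ 2 =
      a k ^+ 2 * cos (al k) * cos (al l) + a k ^+ 2 * sin (al k) * sin (al l)
      + cos (al k) * (cos (al l) * a l ^+ 2) + sin (al k) * (sin (al l) * a l ^+ 2)
      - 2 * (cos (al k) * a k) * (cos (al l) * a l)
      - 2 * (sin (al k) * a k) * (sin (al l) * a l).
    by rewrite cosB; ring.
  rewrite (eq_bigr _ (fun l _ => E l)) !sumrB !big_split /=.
  by rewrite -!mulr_sumr C0 S0 !mulr0 !add0r.
rewrite (eq_bigr _ (fun k _ => inner k)) !sumrB !big_split /=.
by rewrite -!mulr_suml C0 S0 !mul0r !add0r -!mulr_sumr -/X -/Y; ring.
Qed.

End Expi.

Section ScalarGram.
Variables (R : comNzRingType) (m : nat) (I : finType) (P : pred I).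
Variables (L : I -> {scalar 'rV[R]_m}) (c : I -> R).

Definition scalar_gram : 'M[R]_m :=
  \matrix_(p, q) \sum_(s | P s) c s * L s (delta_mx 0 p) * L s (delta_mx 0 q).

Lemma scalar_gram_sym : scalar_gram^T = scalar_gram.
Proof.
by apply/matrixP => p q; rewrite !mxE; apply: eq_bigr => s _; rewrite mulrAC.
Qed.

Lemma scalar_coord (f : {scalar 'rV[R]_m}) (y : 'rV[R]_m) :
  f y = \sum_p y 0 p * f (delta_mx 0 p).
Proof.
rewrite {1}(row_sum_delta y) raddf_sum; apply: eq_bigr => p _.
exact: scalarZ.
Qed.

Lemma scalar_gram_form (y : 'rV[R]_m) :
  (y *m scalar_gram *m y^T) 0 0 = \sum_(s | P s) c s * L s y ^+ 2.
Proof.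
have rhs s : c s * L s y ^+ 2 = \sum_p \sum_q
    c s * (y 0 p * L s (delta_mx 0 p)) * (y 0 q * L s (delta_mx 0 q)).
  rewrite expr2 (scalar_coord (L s) y) mulr_suml mulr_sumr.
  by apply: eq_bigr => p _; rewrite !mulr_sumr; apply: eq_bigr => q _; ring.
rewrite (eq_bigr _ (fun s _ => rhs s)) [RHS]exchange_big /=.
under [RHS]eq_bigr do rewrite exchange_big /=.
rewrite mxE; apply: eq_bigr => q _; rewrite !mxE mulr_suml.
apply: eq_bigr => p _; rewrite !mxE mulr_sumr mulr_suml.
by apply: eq_bigr => s _; ring.
Qed.

End ScalarGram.

Section DirectionalDerivatives.
Variables (R : realType) (V : normedModType R).

Lemma derive_along_line (f : V -> R) (a v : V) :
  'D_v f a = 'D_1 (fun h : R => f (h *: v + a)) 0.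
Proof.
rewrite /derive; congr lim.
suff -> : (fun h : R => h^-1 *: ((f \o shift a) (h *: v) - f a)) =
    (fun h : R => h^-1 *: (((fun k : R => f (k *: v + a)) \o shift 0) h%:A
                            - f (0 *: v + a))) by [].
by apply/funext => h /=; rewrite addr0 scale0r add0r [_%:A]mulr1.
Qed.

Lemma is_derive_comp_scalar (F F' : R -> R) (f : {scalar V}) (a v : V) :
  (forall x : R, is_derive x (1 : R) F (F' x)) -> is_derive a v (F \o f) (F' (f a) * f v).
Proof.
move=> dF.
have line : is_derive (0 : R) 1 (fun h : R => h * f v + f a) (f v).
  by apply: is_derive_eq; rewrite scaler0 add0r addr0 [_%:A]mulr1.
have along : (fun h : R => (F \o f) (h *: v + a)) = F \o (fun h => h * f v + f a).
  by apply/funext => h /=; rewrite linearP.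
have := @is_derive1_comp _ F _ 0 _ _ (dF _) line.
rewrite mul0r add0r -along => -[D1 D1E].
by apply: DeriveDef; [apply/derivable1P | rewrite derive_along_line D1E].
Qed.

Lemma is_derive_big (T : Type) (r : seq T) (P : pred T) (F : T -> V -> R)
    (dF : T -> R) (a v : V) :
  (forall s, is_derive a v (F s) (dF s)) ->
  is_derive a v (fun x => \sum_(s <- r | P s) F s x) (\sum_(s <- r | P s) dF s).
Proof.
move=> dFs; elim: r => [|s r IH].
  by under eq_fun do rewrite big_nil; rewrite big_nil; apply: is_derive_cst.
under eq_fun do rewrite big_cons; rewrite big_cons.
by case: (P s) => //; apply: is_deriveD.
Qed.

Lemma derive_sum_comp_scalar (I : finType) (P : pred I) (L : I -> {scalar V})
    (F F' : I -> R -> R) (a v : V) :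
  (forall s (x : R), is_derive x (1 : R) (F s) (F' s x)) ->
  'D_v (fun t => \sum_(s | P s) F s (L s t)) a = \sum_(s | P s) F' s (L s a) * L s v.
Proof.
by move=> dF; apply: derive_val; apply: is_derive_big => s; apply: is_derive_comp_scalar.
Qed.

End DirectionalDerivatives.

Section SquareMatrices.
Variables (R : comNzRingType) (m : nat).

Lemma trmxX (A : 'M[R]_m) k : (A ^+ k)^T = A^T ^+ k.
Proof.
elim: k => [|k IHk]; first by rewrite !expr0 trmx1.
by rewrite exprS -mulmxE trmx_mul IHk mulmxE -exprSr.
Qed.

Lemma map_mxX (S : comNzRingType) (f : {rmorphism R -> S}) (A : 'M[R]_m) k :
  map_mx f (A ^+ k) = map_mx f A ^+ k.
Proof.
elim: k => [|k IHk]; first by rewrite !expr0 map_mx1.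
by rewrite !exprS -!mulmxE map_mxM IHk.
Qed.

Lemma bilinear_form_tr (D : 'M[R]_m) (x y : 'rV[R]_m) :
  (x *m D *m y^T) 0 0 = (y *m D^T *m x^T) 0 0.
Proof.
transitivity ((x *m D *m y^T)^T 0 0); first by rewrite [RHS]mxE.
by rewrite !trmx_mul trmxK mulmxA.
Qed.

End SquareMatrices.

Section RealQuadraticForms.
Variables (R : realFieldType) (m : nat).

Lemma mulmx_tr_ge0 (w : 'rV[R]_m) : 0 <= (w *m w^T) 0 0.
Proof. by rewrite mxE sumr_ge0 // => q _; rewrite mxE -expr2 sqr_ge0. Qed.

Lemma mulmx_tr_eq0 (w : 'rV[R]_m) : ((w *m w^T) 0 0 == 0) = (w == 0).
Proof.
apply/eqP/eqP => [|->]; last by rewrite mul0mx mxE.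
rewrite mxE => /eqP; rewrite psumr_eq0 => [/allP w0|q _]; last first.
  by rewrite mxE -expr2 sqr_ge0.
apply/rowP => q; have /implyP := w0 q (mem_index_enum q).
by rewrite mxE -expr2 sqrf_eq0 mxE => /(_ isT)/eqP.
Qed.

(* Along the line [x + t e_q] the form is [2 t (x D)_q + t^2 D_qq], a parabola
   that stays nonpositive only if its slope [(x D)_q] at [t = 0] vanishes. *)
Lemma nsd_form_eq0 (D : 'M[R]_m) (x : 'rV[R]_m) :
  D^T = D -> (forall z : 'rV[R]_m, (z *m D *m z^T) 0 0 <= 0) ->
  (x *m D *m x^T) 0 0 = 0 -> x *m D = 0.
Proof.
move=> symD nsd Qx0; apply/rowP => q; rewrite [RHS]mxE.
set e : 'rV[R]_m := delta_mx 0 q; set b := (x *m D) 0 q; set s := - (e *m D *m e^T) 0 0.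
have s_ge0 : 0 <= s by rewrite oppr_ge0.
have xDe : (x *m D *m e^T) 0 0 = b by rewrite trmx_delta -colE mxE.
have eDx : (e *m D *m x^T) 0 0 = b by rewrite bilinear_form_tr symD.
have line t : ((x + t *: e) *m D *m (x + t *: e)^T) 0 0 = 2 * t * b - t ^+ 2 * s.
  rewrite linearD linearZ /= !mulmxDl !mulmxDr -!scalemxAl -!scalemxAr /s.
  move: Qx0 xDe eDx; move: (x *m D *m x^T) (x *m D *m e^T) (e *m D *m x^T).
  by move=> A B C A0 B0 C0; rewrite !mxE A0 B0 C0; ring.
pose u := b / (1 + s).
have b_u : b = u * (1 + s) by rewrite mulfVK // lt0r_neq0 // ltr_wpDr.
have : u ^+ 2 * (2 + s) <= 0.
  have -> : u ^+ 2 * (2 + s) = 2 * u * b - u ^+ 2 * s by rewrite b_u; ring.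
  by rewrite -line nsd.
rewrite pmulr_lle0 ?ltr_wpDr // => u2_le0.
have : u ^+ 2 == 0 by rewrite eq_le u2_le0 sqr_ge0.
by rewrite sqrf_eq0 b_u => /eqP ->; rewrite mul0r.
Qed.

End RealQuadraticForms.

Section RealSymmetricMatrix.
Variables (R : realType) (m : nat) (D : 'M[R]_m).
Hypothesis symD : D^T = D.

Lemma sym_mulmx_sqr_eq0 (u : 'rV[R]_m) : u *m D *m D = 0 -> u *m D = 0.
Proof.
by move=> uDD; apply/eqP; rewrite -mulmx_tr_eq0 trmx_mul symD mulmxA uDD mul0mx mxE.
Qed.

Lemma sym_mulmxX_eq0 (u : 'rV[R]_m) k : u *m D ^+ k.+1 = 0 -> u *m D = 0.
Proof.
elim: k u => [|k IHk] u; first by rewrite expr1.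
rewrite !exprSr -!mulmxE !mulmxA => uDD.
by apply: IHk; rewrite exprSr -mulmxE mulmxA sym_mulmx_sqr_eq0.
Qed.

Lemma sym_kermxX k : (kermx (D ^+ k.+1) == kermx D)%MS.
Proof.
apply/andP; split; apply/row_subP => i; apply/sub_kermxP.
  by apply: (@sym_mulmxX_eq0 _ k); rewrite -row_mul mulmx_ker row0.
by rewrite exprS -mulmxE mulmxA -row_mul mulmx_ker row0 mul0mx.
Qed.

(* For an eigenvector [x + i y] with eigenvalue [i b], symmetry of [D] gives
   [b (x x^T + y y^T) = 0]. *)
Lemma sym_eigenvalue_Re0 (z : R[i]) :
  eigenvalue (map_mx (real_complex R) D) z -> complex.Re z = 0 -> z = 0.
Proof.
move=> /eigenvalueP[v vDz v_neq0] Rez0.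
have [ReMz ImMz] : (forall w, complex.Re (z * w) = - complex.Im z * complex.Im w)
    /\ (forall w, complex.Im (z * w) = complex.Im z * complex.Re w).
  by case: z Rez0 vDz => a b /= -> _; split=> -[c d] /=; ring.
pose x := map_mx (@complex.Re R) v; pose y := map_mx (@complex.Im R) v.
have xD : x *m D = - complex.Im z *: y.
  apply/rowP => q; have /(congr1 (@complex.Re R)) := congr1 (fun w : 'rV[R[i]]_m => w 0 q) vDz.
  rewrite /= !mxE Re_sum ReMz => <-; apply: eq_bigr => p _.
  by rewrite !mxE; case: (v 0 p) => ? ? /=; ring.
have yD : y *m D = complex.Im z *: x.
  apply/rowP => q; have /(congr1 (@complex.Im R)) := congr1 (fun w : 'rV[R[i]]_m => w 0 q) vDz.
  rewrite /= !mxE Im_sum ImMz => <-; apply: eq_bigr => p _.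
  by rewrite !mxE; case: (v 0 p) => ? ? /=; ring.
have := bilinear_form_tr D x y; rewrite symD xD yD -!scalemxAl.
move: (mulmx_tr_ge0 x) (mulmx_tr_ge0 y) (mulmx_tr_eq0 x) (mulmx_tr_eq0 y).
move: (x *m x^T) (y *m y^T) => Nx Ny Nx_ge0 Ny_ge0 Nx0 Ny0.
rewrite !mxE mulNr => /eqP; rewrite eq_sym -subr_eq0 opprK -mulrDr mulf_eq0.
case/orP=> [/eqP Imz0|]; first by apply/eqP; rewrite eq_complex Rez0 Imz0 !eqxx.
rewrite paddr_eq0 // Nx0 Ny0 => /andP[/eqP x0 /eqP y0].
case/eqP: v_neq0; apply/rowP => q; have /rowP/(_ q) := x0; have /rowP/(_ q) := y0.
by rewrite !mxE; case: (v 0 q) => ? ? /= -> ->.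
Qed.

End RealSymmetricMatrix.

Lemma center_dim_sym (R : realType) m (D : 'M[R]_m) :
  D^T = D -> center_dim D = \rank (kermx D).
Proof.
case: m D => [|k] D symD.
  have rank0 (F : fieldType) (A : 'M[F]_0) : \rank A = 0%N.
    by rewrite thinmx0 mxrank0.
  by rewrite /center_dim !rank0.
rewrite /center_dim; case: closed_field_poly_normal => rs /= rsE.
set Dc := map_mx (real_complex R) D in rsE *.
have rsP z : (z \in rs) = eigenvalue Dc z.
  by rewrite eigenvalue_root_char rsE (monicP (char_poly_monic _)) scale1r root_prod_XsubC.
rewrite -big_filter (@eq_in_filter _ _ (pred1 0)) => [|z]; last first.
  rewrite mem_undup rsP /= => Dcz; apply/eqP/eqP => [|->//].
  by move=> Rez0; apply: (sym_eigenvalue_Re0 symD Dcz).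
have [rs0|rsN0] := boolP (0 \in rs).
  rewrite filter_pred1_uniq ?undup_uniq ?mem_undup // big_seq1 raddf0 subr0.
  rewrite /Dc -map_mxX map_trmx -map_kermx mxrank_map trmxX symD.
  exact: eqmx_rank (sym_kermxX symD k).
rewrite big_filter big1_seq => [|z /andP[/eqP-> ]]; last by rewrite mem_undup (negPf rsN0).
move: rsN0; rewrite rsP -(rmorph0 (real_complex R)) eigenvalue_map negbK.
by rewrite /eigenvalue /eigenspace raddf0 subr0 mxrank0 => /eqP->; rewrite mxrank0.
Qed.

Section DefectMap.
Variables (R : realType) (d : nat) (H : 'M[R[i]]_d).

Fact defect_map_is_linear : linear (defect_map H).
Proof.
move=> h X Y; rewrite /defect_map !scale_row_mx !add_row_mx -!linearZ -!linearD /=.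
have S_lin i j :
  \sum_k H i k * conjc (H j k) * ((h *: X + Y) i k - (h *: X + Y) j k)%:C%C =
  h%:C%C * \sum_k H i k * conjc (H j k) * (X i k - X j k)%:C%C
  + \sum_k H i k * conjc (H j k) * (Y i k - Y j k)%:C%C.
  rewrite mulr_sumr -big_split; apply: eq_bigr => k _.
  by rewrite !mxE !rmorphB !rmorphD !rmorphM /=; ring.
have [ReL ImL] : (forall z w : R[i], complex.Re (h%:C%C * z + w) = h * complex.Re z + complex.Re w)
    /\ (forall z w : R[i], complex.Im (h%:C%C * z + w) = h * complex.Im z + complex.Im w).
  by split=> -[a b] [c e] /=; ring.
congr row_mx; [|congr row_mx]; congr mxvec; apply/matrixP => i j; rewrite !mxE.
- by case: ifP; rewrite ?mulr0 ?addr0.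
- by case: ifP; rewrite ?mulr0 ?addr0 // S_lin ReL.
- by case: ifP; rewrite ?mulr0 ?addr0 // S_lin ImL.
Qed.

Lemma defect_map_eq0 (X : 'M[R]_d) :
  defect_map H X = 0 <->
  (forall i j : 'I_d, (val j == 0%N) || (val i == 0%N) -> X i j = 0) /\
  (forall i j : 'I_d, (i < j)%N ->
     \sum_k H i k * conjc (H j k) * (X i k - X j k)%:C%C = 0).
Proof.
rewrite /defect_map /=; split.
  move/eqP; rewrite !row_mx_eq0 !mxvec_eq0 => /andP[/eqP B0 /andP[/eqP Re0 /eqP Im0]].
  split=> i j ij; first by have /matrixP/(_ i j) := B0; rewrite !mxE ij.
  have /matrixP/(_ i j) := Re0; have /matrixP/(_ i j) := Im0; rewrite !mxE ij.
  by move=> ImS0 ReS0; apply/eqP; rewrite eq_complex ImS0 ReS0 !eqxx.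
case=> B0 S0; set M1 := \matrix_(i, j) _; set M2 := \matrix_(i, j) _; set M3 := \matrix_(i, j) _.
have [-> -> ->] : [/\ M1 = 0, M2 = 0 & M3 = 0].
  split; apply/matrixP => i j; rewrite !mxE; case: ifP => //; first by move/B0.
    by move/S0 ->.
  by move/S0 ->.
by apply/eqP; rewrite !row_mx_eq0 !mxvec_eq0 !eqxx.
Qed.

HB.instance Definition _ :=
  GRing.isLinear.Build R 'M[R]_d _ *:%R (defect_map H) defect_map_is_linear.

End DefectMap.

Section HadamardPhases.
Variables (R : realType) (n : nat).
Local Notation vec := 'rV[R]_(n * n).
Local Notation quad := (('I_(1 + n) * 'I_(1 + n)) * ('I_(1 + n) * 'I_(1 + n)))%type.

Definition phase_mx (t : vec) : 'M[R]_(1 + n) := block_mx 0 0 0 (vec_mx t).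

Fact phase_mx_is_linear : linear phase_mx.
Proof.
by move=> a u v; rewrite /phase_mx linearP scale_block_mx add_block_mx !scaler0 !addr0.
Qed.

HB.instance Definition _ :=
  GRing.isLinear.Build R vec 'M[R]_(1 + n) _ phase_mx phase_mx_is_linear.

Lemma Hd_phase (t : vec) : Hd t = map_mx (@expi R) (phase_mx t).
Proof. by rewrite /Hd /phase_mx map_block_mx !map_const_mx /expi cos0 sin0. Qed.

Lemma phase_mx_border (t : vec) (i j : 'I_(1 + n)) :
  (val j == 0%N) || (val i == 0%N) -> phase_mx t i j = 0.
Proof.
rewrite /phase_mx !mxE; case: splitP => a ea; rewrite !mxE; case: splitP => b eb; rewrite ?mxE //.
by move: ea eb; case: i => i ?; case: j => j ? /= -> ->; rewrite !add1n.
Qed.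

Lemma border0_phase_mx (X : 'M[R]_(1 + n)) :
  (forall i j : 'I_(1 + n), (val j == 0%N) || (val i == 0%N) -> X i j = 0) ->
  X = phase_mx (mxvec (drsubmx X)).
Proof.
move=> X0; apply/matrixP => i j; rewrite /phase_mx mxvecK !mxE.
have at0 (k : 'I_(1 + n)) (c : 'I_1) : k = c :> nat -> val k == 0%N.
  by case: c => -[] // ? /= ->.
case: splitP => [a /at0 i0 | a ea]; rewrite !mxE.
  by case: splitP => b _; rewrite !mxE X0 // i0 orbT.
case: splitP => [b /at0 j0 | b eb]; rewrite !mxE; first by rewrite X0 // j0.
by congr (X _ _); apply: val_inj.
Qed.

Lemma phase_mx_inj : injective phase_mx.
Proof. by move=> t u /(congr1 drsubmx); rewrite !block_mxKdr => /(can_inj vec_mxK). Qed.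

Definition phase_gap (t : vec) (i j k : 'I_(1 + n)) : R :=
  phase_mx t i k - phase_mx t j k.

Lemma Hd_gram_entry (t : vec) i j :
  (Hd t *m adjmx (Hd t)) i j = \sum_k expi (phase_gap t i j k).
Proof.
rewrite Hd_phase /phase_gap; move: (phase_mx t) => P.
by rewrite /adjmx !mxE; apply: eq_bigr => k _; rewrite !mxE expi_mulJ.
Qed.

Lemma hadamard_sum_expi_gap (t : vec) (i j : 'I_(1 + n)) :
  Hd t *m adjmx (Hd t) = (1 + n)%:R%:M -> i != j ->
  \sum_k expi (phase_gap t i j k) = 0.
Proof. by move=> /matrixP/(_ i j); rewrite Hd_gram_entry mxE => -> /negPf->. Qed.

Definition offdiag (s : quad) : bool := s.1.2 != s.1.1.

Definition cross_phase (s : quad) (t : vec) : R :=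
  phase_gap t s.1.1 s.1.2 s.2.1 - phase_gap t s.1.1 s.1.2 s.2.2.

Fact cross_phase_is_scalar s : scalar (cross_phase s).
Proof. by move=> a u v; rewrite /cross_phase /phase_gap !linearP !mxE; ring. Qed.

HB.instance Definition _ s :=
  GRing.isLinear.Build R vec R *%R (cross_phase s) (cross_phase_is_scalar s).

Lemma sum_offdiag (F : quad -> R) :
  \sum_(s | offdiag s) F s = \sum_i \sum_(j | j != i) \sum_k \sum_l F ((i, j), (k, l)).
Proof.
under [RHS]eq_bigr do under eq_bigr do rewrite pair_bigA.
rewrite pair_big_dep pair_big /=.
by apply: eq_big => [[[i j] [k l]]|[[i j] [k l]]] //=; rewrite andbT.
Qed.

Lemma Vd_sum_cos (t : vec) : Vd t = \sum_(s | offdiag s) cos (cross_phase s t).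
Proof.
rewrite sum_offdiag; apply: eq_bigr => i _; apply: eq_bigr => j _.
by rewrite Hd_gram_entry Re_normc2_sum_expi.
Qed.

Lemma Phid_sum_sin (t : vec) : Phid t =
  \row_p \sum_(s | offdiag s) cross_phase s (delta_mx 0 p) * sin (cross_phase s t).
Proof.
rewrite /Phid; have -> : @Vd R n = fun t => \sum_(s | offdiag s) cos (cross_phase s t).
  by apply/funext => ?; rewrite Vd_sum_cos.
apply/rowP => p; rewrite !mxE.
rewrite (derive_sum_comp_scalar _ _ (F := fun _ => cos) (F' := fun _ x => - sin x) _ _).
by rewrite -sumrN; apply: eq_bigr => s _; rewrite mulNr opprK mulrC.
Qed.

Lemma DPhid_gram (t0 : vec) :
  DPhid t0 = scalar_gram offdiag cross_phase (fun s => cos (cross_phase s t0)).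
Proof.
apply/matrixP => p q; rewrite !mxE.
under eq_fun do rewrite Phid_sum_sin mxE.
rewrite (derive_sum_comp_scalar _ _
    (F := fun s x => cross_phase s (delta_mx 0 p) * sin x)
    (F' := fun s x => cross_phase s (delta_mx 0 p) * cos x) _ _).
by apply: eq_bigr => s _; ring.
Qed.

Lemma DPhid_sym (t0 : vec) : (DPhid t0)^T = DPhid t0.
Proof. by rewrite DPhid_gram scalar_gram_sym. Qed.

Definition gap_sum (t0 y : vec) (i j : 'I_(1 + n)) : R[i] :=
  \sum_k expi (phase_gap t0 i j k) * (phase_gap y i j k)%:C%C.

Lemma DPhid_form (t0 y : vec) : Hd t0 *m adjmx (Hd t0) = (1 + n)%:R%:M ->
  (y *m DPhid t0 *m y^T) 0 0 = - 2 * \sum_i \sum_(j | j != i)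
    (complex.Re (gap_sum t0 y i j) ^+ 2 + complex.Im (gap_sum t0 y i j) ^+ 2).
Proof.
move=> hadH; rewrite DPhid_gram scalar_gram_form sum_offdiag mulr_sumr.
apply: eq_bigr => i _; rewrite mulr_sumr; apply: eq_bigr => j ji.
rewrite (@sum_cos_sqr_diff _ _ (phase_gap t0 i j) (phase_gap y i j)) //.
by rewrite hadamard_sum_expi_gap // eq_sym.
Qed.

Lemma DPhid_ker (t0 y : vec) : Hd t0 *m adjmx (Hd t0) = (1 + n)%:R%:M ->
  y *m DPhid t0 = 0 <-> forall i j, i != j -> gap_sum t0 y i j = 0.
Proof.
move=> hadH; rewrite -sum_offdiag_Re2_Im2_eq0; split=> [yD0|sum0].
  have := DPhid_form y hadH; rewrite yD0 mul0mx mxE => /esym/eqP.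
  by rewrite mulf_eq0 oppr_eq0 pnatr_eq0 => /eqP.
apply: nsd_form_eq0; first exact: DPhid_sym.
  move=> z; rewrite DPhid_form // mulNr oppr_le0 mulr_ge0 // !sumr_ge0 // => i _.
  by rewrite sumr_ge0 // => j _; rewrite addr_ge0 ?sqr_ge0.
by rewrite DPhid_form // sum0 mulr0.
Qed.

Lemma defect_sum_phase (t0 y : vec) i j :
  \sum_k Hd t0 i k * conjc (Hd t0 j k) * (phase_mx y i k - phase_mx y j k)%:C%C =
  gap_sum t0 y i j.
Proof.
rewrite Hd_phase /gap_sum /phase_gap; move: (phase_mx t0) (phase_mx y) => P Y.
by apply: eq_bigr => k _; rewrite !mxE expi_mulJ.
Qed.

Lemma gap_sum_swap (t0 y : vec) i j : gap_sum t0 y j i = - conjc (gap_sum t0 y i j).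
Proof.
have gapN t k : phase_gap t j i k = - phase_gap t i j k by rewrite /phase_gap opprB.
rewrite /gap_sum rmorph_sum -sumrN; apply: eq_bigr => k _.
by rewrite !gapN !expi_mul_real cosN sinN /=; congr Complex; ring.
Qed.

Lemma defect_map_phase (t0 y : vec) :
  defect_map (Hd t0) (phase_mx y) = 0 <-> forall i j, i != j -> gap_sum t0 y i j = 0.
Proof.
rewrite defect_map_eq0; split=> [[_ S0] i j|S0].
  rewrite neq_ltn => /orP[] ij; first by rewrite -defect_sum_phase S0.
  by rewrite gap_sum_swap -defect_sum_phase S0 // conjc0 oppr0.
split=> [i j /phase_mx_border //|i j ij].
by rewrite defect_sum_phase S0 // neq_ltn ij.
Qed.

Lemma defect_Hd (t0 : vec) : Hd t0 *m adjmx (Hd t0) = (1 + n)%:R%:M ->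
  defect (Hd t0) = \rank (kermx (DPhid t0)).
Proof.
move=> hadH; pose P := lin1_mx (mxvec \o phase_mx).
have P_free : row_free P.
  rewrite -kermx_eq0; apply/eqP/row_matrixP => i; rewrite row0.
  have : row i (kermx P) *m P = 0 by rewrite -row_mul mulmx_ker row0.
  by rewrite mul_rV_lin1 /= => /eqP; rewrite mxvec_eq0 -(linear0 phase_mx) => /eqP/phase_mx_inj.
pose G := lin1_mx (fun v => defect_map (Hd t0) (vec_mx v)).
have G_E u : u *m G = defect_map (Hd t0) (vec_mx u).
  exact: (mul_rV_lin1 (defect_map (Hd t0) \o vec_mx)).
have kerP x : (x <= kermx (DPhid t0))%MS = (defect_map (Hd t0) (phase_mx x) == 0).
  by apply/sub_kermxP/eqP; rewrite defect_map_phase -(DPhid_ker _ hadH).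
rewrite /defect -/G -(mxrankMfree _ P_free); apply/esym/eqmx_rank/andP; split.
  apply/row_subP => i; rewrite row_mul; apply/sub_kermxP.
  by rewrite G_E mul_rV_lin1 /= mxvecK; apply/eqP; rewrite -kerP row_sub.
apply/row_subP => i; set u := row i _.
have /defect_map_eq0[/border0_phase_mx uE _] : defect_map (Hd t0) (vec_mx u) = 0.
  by rewrite -G_E /u -row_mul mulmx_ker row0.
have -> : u = mxvec (drsubmx (vec_mx u)) *m P by rewrite mul_rV_lin1 /= -uE vec_mxK.
by apply: submxMr; rewrite kerP -uE -G_E /u -row_mul mulmx_ker row0.
Qed.

End HadamardPhases.

Unset Implicit Arguments.

Theorem mainTheorem1 (R : realType) (n : nat) (hn : (1 <= n)%N)
    (theta0 : 'rV[R]_(n * n)) :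
  Hd theta0 *m adjmx (Hd theta0) = (1 + n)%:R%:M ->
  center_dim (DPhid theta0) = defect (Hd theta0).
Proof.
move=> hadH; rewrite (defect_Hd hadH).
exact: center_dim_sym (DPhid_sym theta0).
Qed.
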